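(* Fix a nonempty $A\subseteq S$ and $w\in A$, and let $E_0=\{\tau_{\mathcal E_N^w}=\tau_{\mathcal E_N(A)}\}$. Let $x,y\in S$ be distinct with $r(x,y)=r(y,x)>0$. Then, as $N\to\infty$, $$\Big|\mathbb P_{\zeta_1^{x,y}}[E_0]-\frac{N-1}{N}\mathbb P_{\xi_N^x}[E_0]-\frac1N\mathbb P_{\xi_N^y}[E_0]\Big|=O(d_N\log N).$$
   Context: $S$ is finite; $r:S\times S\to[0,\infty)$, $r(x,x)=0$, are the rates of an irreducible continuous-time Markov chain on $S$. $\mathcal H_N=\{\eta\in\{0,1,2,\dots\}^S:\sum_x\eta_x=N\}$; $\sigma^{x,y}\eta$ moves one particle from $x$ to $y$ (if $\eta_x\ge1$; else $\sigma^{x,y}\eta=\eta$). With $d_N>0$, $d_N\to0$, the inclusion process is the Markov chain on $\mathcal H_N$ with generator $(\mathcal L_NF)(\eta)=\sum_{x\ne y}\eta_x(d_N+\eta_y)r(x,y)\{F(\sigma^{x,y}\eta)-F(\eta)\}$; $\mathbb P_\eta$ its law from $\eta$; $\tau_{\mathcal C}$ the hitting time of $\mathcal C\subseteq\mathcal H_N$. $\xi_N^z$: all $N$ particles at $z$; $\mathcal E_N^z=\{\xi_N^z\}$, $\mathcal E_N(A)=\bigcup_{z\in A}\mathcal E_N^z$. For $0\le i\le N$, $\zeta_i^{x,y}$ is the configuration with $N-i$ particles at $x$, $i$ at $y$, none elsewhere. $O(\cdot)$ has constant independent of $N$. *)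

From HB Require Import structures.
From mathcomp Require Import all_boot all_order all_algebra.
From mathcomp Require Import all_classical all_reals all_analysis.
Set Implicit Arguments. Unset Strict Implicit. Unset Printing Implicit Defensive.
Import Order.TTheory GRing.Theory Num.Theory numFieldNormedType.Exports.
Local Open Scope ring_scope.

Section InclusionProcess.
Variables (R : realType) (S : finType).

Definition config := {ffun S -> nat}.

Definition xi (N : nat) (z : S) : config := [ffun s => if s == z then N else 0%N].

Definition zeta (N i : nat) (x y : S) : config :=
  [ffun s => if s == x then (N - i)%N else if s == y then i else 0%N].

Definition sigma (x y : S) (eta : config) : config :=
  if (0 < eta x)%N then [ffun s => (eta s - (s == x) + (s == y))%N] else eta.

Definition inE_N (N : nat) (A : {set S}) (eta : config) : bool :=
  [exists z in A, eta == xi N z].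

Definition rate (dN : R) (r : S -> S -> R) (eta : config) (x y : S) : R :=
  if x != y then (eta x)%:R * (dN + (eta y)%:R) * r x y else 0.

Definition total_rate (dN : R) (r : S -> S -> R) (eta : config) : R :=
  \sum_(p : S * S) rate dN r eta p.1 p.2.

(* hitN n eta = P_eta[ the (jump chain of the) process hits E_N(A) within
   n jumps, and the first configuration of E_N(A) visited is xi_N^w ] *)
Fixpoint hitN (N : nat) (dN : R) (r : S -> S -> R) (A : {set S}) (w : S)
    (n : nat) (eta : config) : R :=
  if inE_N N A eta then (eta == xi N w)%:R
  else match n with
       | 0 => 0
       | n'.+1 =>
         if total_rate dN r eta == 0 then 0
         else \sum_(p : S * S)
                (rate dN r eta p.1 p.2 / total_rate dN r eta) *
                hitN N dN r A w n' (sigma p.1 p.2 eta)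
       end.

(* P_eta[ tau_{E_N^w} = tau_{E_N(A)} ] for the inclusion process with
   parameter d_N = dN (limit as n -> oo of the above) *)
Definition probE0 (N : nat) (dN : R) (r : S -> S -> R) (A : {set S}) (w : S)
    (eta : config) : R :=
  limn (fun n => hitN N dN r A w n eta).

Definition irreducible (r : S -> S -> R) : Prop :=
  forall x y : S, connect [rel a b | 0 < r a b] x y.

End InclusionProcess.

(* Write g_i for the probability of E_0 started from zeta_i^{x,y}. Away from
   E_N(A) the hitting probability is annihilated by the generator; at zeta_i the
   jumps along the edge x-y give the birth-death equation
     (N-i)(d+i)(g_{i+1} - g_i) = i(d+N-i)(g_i - g_{i-1}) + O(N d),
   the error coming from the other jumps, each of rate at most N d r.
   For the increments D_i = g_{i+1} - g_i this reads
     |D_i - D_0| <= (1 + d/(N-i)) |D_{i-1} - D_0| + O(d (1/i + 1/(N-i))),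
   so a discrete Gronwall inequality gives |D_i - D_0| = O(d H_N) whenever
   d H_N <= 1 (H_N the harmonic number; otherwise the claim is trivial).
   Finally g_1 - (N-1)/N g_0 - g_N/N is the mean of D_0 - D_i over i < N,
   and H_N = O(log N). *)

From Pilot Require Import Defs.
From mathcomp Require Import all_boot all_order all_algebra.
From mathcomp Require Import all_classical all_reals all_analysis.
From mathcomp Require Import lra zify ring.
Set Implicit Arguments. Unset Strict Implicit. Unset Printing Implicit Defensive.
Import Order.TTheory GRing.Theory Num.Theory numFieldNormedType.Exports.
Local Open Scope classical_set_scope.
Local Open Scope ring_scope.

Section DiscreteBounds.
Variable R : realType.

Lemma gronwall_nat (u t b : nat -> R) (n : nat) : u 0%N = 0 ->
    (forall j, (j < n)%N -> [/\ 0 <= t j, 0 <= b j & u j.+1 <= (1 + t j) * u j + b j]) ->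
  u n <= expR (\sum_(0 <= j < n) t j) * \sum_(0 <= j < n) b j.
Proof.
elim: n => [u0 _|n IH u0 step]; first by rewrite !big_geq // mulr0 u0.
have [t0 b0 un] := step n (ltnSn n).
have {}IH := IH u0 (fun j jn => step j (ltnW jn)).
have tsum0 : 0 <= \sum_(0 <= j < n) t j.
  by rewrite big_nat_cond; apply: sumr_ge0 => j /andP[/andP[_ jn] _]; case: (step j (ltnW jn)).
have bsum0 : 0 <= \sum_(0 <= j < n) b j.
  by rewrite big_nat_cond; apply: sumr_ge0 => j /andP[/andP[_ jn] _]; case: (step j (ltnW jn)).
rewrite !big_nat_recr //= expRD mulrDr.
have E1 : 1 <= expR (\sum_(0 <= j < n) t j) * expR (t n).
  by rewrite -expRD -expR0 ler_expR addr_ge0.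
apply: (le_trans un); apply: lerD; last by rewrite -[X in X <= _]mul1r; apply: ler_wpM2r.
apply: (le_trans (ler_wpM2l _ IH)); first by rewrite addr_ge0.
rewrite mulrA; apply: ler_wpM2r => //; rewrite mulrC.
by apply: ler_wpM2l; [exact: expR_ge0 | exact: expR_ge1Dx].
Qed.

Lemma increment_step (m p d k D0 Dm Di : R) : 0 < m -> 0 < p -> 0 < d -> `|D0| <= 1 ->
    `|p * (d + m) * Di - m * (d + p) * Dm| <= (m + p) * d * k ->
  `|Di - D0| <= (1 + d / p) * `|Dm - D0| + d * (1 + k) * (m^-1 + p^-1).
Proof.
move=> m0 p0 d0 D01 defect.
set e := p * (d + m) * Di - m * (d + p) * Dm in defect.
have q0 : 0 < p * (d + m) by rewrite mulr_gt0 // addr_gt0.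
have shrink (X Y : R) : `|X| <= Y -> `|X / (p * (d + m))| <= Y / (p * m).
  move=> XY; rewrite normrM normfV (ger0_norm (ltW q0)).
  apply: (le_trans (ler_wpM2r _ XY)); first by rewrite invr_ge0 ltW.
  apply: ler_wpM2l; first exact: le_trans XY.
  by rewrite lef_pV2 ?posrE ?mulr_gt0 ?addr_gt0 // ler_pM2l // lerDr ltW.
have -> : Di - D0 = m * (d + p) / (p * (d + m)) * (Dm - D0)
    + d * (m - p) / (p * (d + m)) * D0 + e / (p * (d + m)).
  by rewrite /e; field; rewrite !gt_eqF ?addr_gt0.
have -> : d * (1 + k) * (m^-1 + p^-1) = d * (m + p) / (p * m) + (m + p) * d * k / (p * m).
  by field; rewrite !gt_eqF.
rewrite -addrA; apply: (le_trans (ler_normD _ _)); apply: lerD.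
  rewrite normrM ger0_norm; last by rewrite !(divr_ge0, mulr_ge0, addr_ge0) // ltW.
  apply: ler_wpM2r => //; rewrite ler_pdivrMr //.
  have -> : (1 + d / p) * (p * (d + m)) = (p + d) * (d + m) by field; rewrite gt_eqF.
  nra.
apply: (le_trans (ler_normD _ _)); apply: lerD; last exact: shrink.
rewrite normrM -[X in _ <= X]mulr1; apply: ler_pM => //; apply: shrink.
rewrite normrM gtr0_norm // ler_pM2l // ler_norml; apply/andP; split; lra.
Qed.

Lemma series_harmonic_rev (n : nat) :
  \sum_(0 <= j < n) ((n - j)%:R : R)^-1 = series harmonic n.
Proof.
rewrite big_nat_rev /series /=; apply: eq_big_nat => j /andP[_ jn].
by rewrite add0n subKn.
Qed.

Lemma sub_convex_comb_le1 (N : nat) (a b c : R) : (0 < N)%N ->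
    0 <= a <= 1 -> 0 <= b <= 1 -> 0 <= c <= 1 ->
  `|a - N.-1%:R / N%:R * b - 1 / N%:R * c| <= 1.
Proof.
move=> N0 /andP[? ?] /andP[? ?] /andP[? ?].
have NR : 0 < (N%:R : R) by rewrite ltr0n.
set s := 1 / (N%:R : R).
have -> : N.-1%:R / N%:R = 1 - s.
  have eN : (N%:R : R) = N.-1%:R + 1 by rewrite natr1 prednK.
  by rewrite /s eN; field; rewrite -eN gt_eqF.
have s0 : 0 < s by rewrite divr_gt0.
have s1 : s <= 1 by rewrite ler_pdivrMr // mul1r ler1n.
have : 0 <= (1 - s) * b + s * c <= 1 by apply/andP; split; nra.
by rewrite ler_norml => /andP[? ?]; apply/andP; split; lra.
Qed.

Lemma sub_convex_comb_increments (g : nat -> R) (N : nat) : (0 < N)%N ->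
  g 1%N - N.-1%:R / N%:R * g 0%N - 1 / N%:R * g N
    = N%:R^-1 * \sum_(0 <= i < N) ((g 1%N - g 0%N) - (g i.+1 - g i)).
Proof.
move=> N0; rewrite sumrB sumr_const_nat subn0 telescope_sumr // -[(_ - _) *+ N]mulr_natr.
have eN : (N%:R : R) = N.-1%:R + 1 by rewrite natr1 prednK.
by rewrite eN; field; rewrite -eN pnatr_eq0 -lt0n.
Qed.

Lemma invn_le_ln_diff (n : nat) : (n.+2%:R : R)^-1 <= ln n.+2%:R - ln n.+1%:R.
Proof.
have n1 : (n.+1%:R : R) \is Num.pos by rewrite posrE ltr0n.
have n2 : (n.+2%:R : R) \is Num.pos by rewrite posrE ltr0n.
have : -1 < - (n.+2%:R : R)^-1 by rewrite ltrN2 invf_lt1 ?ltr0n // ltr1n.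
move=> /le_ln1Dx; rewrite (_ : 1 - _ = n.+1%:R / n.+2%:R); last first.
  by rewrite -[n.+2]addn1 natrD; field; rewrite gt_eqF // -natr1 -natrD ltr0n addn1.
by rewrite ln_div // -[_ <= ln _ - _]lerN2 opprB.
Qed.

Lemma series_harmonic_le_1Dln (n : nat) : series harmonic n.+1 <= 1 + ln n.+1%:R :> R.
Proof.
elim: n => [|n IH]; first by rewrite /series /= big_nat1 ln1 invr1 addr0.
by rewrite seriesSr /=; apply: le_trans (lerD IH (invn_le_ln_diff n)) _; lra.
Qed.

Lemma series_harmonic_le_ln (N : nat) : (2 <= N)%N ->
  series harmonic N.-1 <= (1 + (ln 2)^-1) * ln N%:R :> R.
Proof.
case: N => [|[|n]] // _ /=.
have ln2 : 0 < ln (2 : R) by rewrite ln_gt0 // ltr1n.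
have ln_mono : ln (n.+1%:R : R) <= ln n.+2%:R by rewrite ler_ln ?posrE ?ltr0n // ler_nat.
have ln2_le : 1 <= ln (n.+2%:R : R) / ln 2.
  by rewrite ler_pdivlMr // mul1r ler_ln ?posrE ?ltr0n // ler_nat.
have := series_harmonic_le_1Dln n; lra.
Qed.

Section NearlyHarmonicSequence.
Variables (N : nat) (d k : R) (g : nat -> R).
Hypotheses (N_gt0 : (0 < N)%N) (d_gt0 : 0 < d) (k_ge0 : 0 <= k).
Hypothesis g_ge0_le1 : forall i, 0 <= g i <= 1.
Hypothesis defect : forall i, (0 < i < N)%N ->
  `|(N - i)%:R * (d + i%:R) * (g i.+1 - g i) - i%:R * (d + (N - i)%:R) * (g i - g i.-1)|
    <= N%:R * d * k.

Local Notation D i := (g i.+1 - g i).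
Local Notation H := (series harmonic N.-1 : R).

Lemma increment_dev_le i : d * H <= 1 -> (i < N)%N ->
  `|D i - D 0%N| <= expR 1 * (2 * d * (1 + k) * H).
Proof.
move=> dH iN.
pose t j := d / (N.-1 - j)%:R.
pose b j := d * (1 + k) * (j.+1%:R^-1 + (N.-1 - j)%:R^-1).
have t0 j : 0 <= t j by rewrite divr_ge0 ?ler0n ?ltW.
have b0 j : 0 <= b j by rewrite !mulr_ge0 ?addr_ge0 ?invr_ge0 ?ler0n ?ler01 // ltW.
have D01 : `|D 0%N| <= 1.
  have /andP[? ?] := g_ge0_le1 0; have /andP[? ?] := g_ge0_le1 1.
  by rewrite ler_norml; apply/andP; split; lra.
have step j : (j < i)%N ->
    [/\ 0 <= t j, 0 <= b j & `|D j.+1 - D 0%N| <= (1 + t j) * `|D j - D 0%N| + b j].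
  move=> ji; split => //; apply: increment_step => //; first by rewrite ltr0n; lia.
  have jN : (0 < j.+1 < N)%N by lia.
  rewrite -natrD (_ : j.+1 + (N.-1 - j) = N)%N; last by lia.
  by rewrite (_ : N.-1 - j = N - j.+1)%N; [exact: defect | lia].
have u0 : `|D 0%N - D 0%N| = 0 by rewrite subrr normr0.
have gron := @gronwall_nat (fun j => `|D j - D 0%N|) t b i u0 step.
have iN1 : (i <= N.-1)%N by lia.
have tsum : \sum_(0 <= j < i) t j <= 1.
  apply: le_trans (nondecreasing_series (fun j _ _ => t0 j) iN1) _.
  by rewrite -mulr_sumr series_harmonic_rev.
have bsum : \sum_(0 <= j < i) b j <= 2 * d * (1 + k) * H.
  apply: le_trans (nondecreasing_series (fun j _ _ => b0 j) iN1) _.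
  rewrite -mulr_sumr big_split /= series_harmonic_rev.
  have -> : \sum_(0 <= j < N.-1) (j.+1%:R : R)^-1 = H by []; lra.
apply: le_trans gron _; apply: ler_pM.
- exact: expR_ge0.
- by rewrite big_nat_cond sumr_ge0.
- by rewrite ler_expR.
- exact: bsum.
Qed.

Lemma nearly_harmonic_bound :
  `|g 1%N - N.-1%:R / N%:R * g 0%N - 1 / N%:R * g N| <= 2 * expR 1 * (1 + k) * (d * H).
Proof.
have e2 : 1 + 1 <= expR 1 :> R := expR_ge1Dx 1.
have [dH_small|dH_large] := leP (d * H) 1; last first.
  apply: (@le_trans _ _ 1); first by apply: sub_convex_comb_le1; rewrite ?g_ge0_le1.
  have ek : 0 <= expR 1 * k := mulr_ge0 (expR_ge0 1) k_ge0.
  have : 1 <= 2 * expR 1 * (1 + k) by lra.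
  move: (2 * _ * _) (d * H) dH_large => C x x1 C1.
  by rewrite -[1]mulr1; apply: ler_pM => //; exact: ltW.
have NR : 0 < (N%:R : R) by rewrite ltr0n.
rewrite sub_convex_comb_increments // normrM ger0_norm ?invr_ge0 ?ler0n //.
rewrite ler_pdivrMl // mulrC.
apply: le_trans (ler_norm_sum _ _ _) _.
have -> : 2 * expR 1 * (1 + k) * (d * H) * N%:R
    = \sum_(0 <= i < N) expR 1 * (2 * d * (1 + k) * H).
  by rewrite sumr_const_nat subn0 -mulr_natr; ring.
rewrite big_nat_cond [X in _ <= X]big_nat_cond.
by apply: ler_sum => i /andP[/andP[_ iN] _]; rewrite distrC increment_dev_le.
Qed.

End NearlyHarmonicSequence.

End DiscreteBounds.

Section HittingProbability.
Variables (R : realType) (S : finType) (r : S -> S -> R).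
Hypothesis r_ge0 : forall a b, 0 <= r a b.
Variables (N : nat) (dN : R) (A : {set S}) (w : S).
Hypothesis dN_gt0 : 0 < dN.

Local Notation rate := (rate dN r).
Local Notation total_rate := (total_rate dN r).
Local Notation hit := (hitN N dN r A w).
Local Notation P := (probE0 N dN r A w).

Lemma rate_ge0 eta a b : 0 <= rate eta a b.
Proof.
by rewrite /Defs.rate; case: ifP => // _; rewrite !mulr_ge0 ?addr_ge0 ?ler0n // ltW.
Qed.

Lemma jump_prob_ge0 eta (p : S * S) : 0 <= rate eta p.1 p.2 / total_rate eta.
Proof. by rewrite divr_ge0 ?rate_ge0 ?sumr_ge0 // => q _; apply: rate_ge0. Qed.

Lemma sum_jump_prob eta : total_rate eta != 0 ->
  \sum_(p : S * S) rate eta p.1 p.2 / total_rate eta = 1.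
Proof. by move=> T0; rewrite -mulr_suml divff. Qed.

Lemma hitN_ge0_le1 n eta : 0 <= hit n eta <= 1.
Proof.
have bool01 (b : bool) : 0 <= (b%:R : R) <= 1 by case: b; rewrite /= ?lexx ?ler01.
elim: n eta => [|n IH] eta /=; first by case: ifP; rewrite ?bool01 ?lexx ?ler01.
case: ifP => _; first exact: bool01.
case: ifP => [_|/negbT T0]; first by rewrite lexx ler01.
apply/andP; split.
  by apply: sumr_ge0 => p _; rewrite mulr_ge0 ?jump_prob_ge0 //; case/andP: (IH (sigma p.1 p.2 eta)).
rewrite -(sum_jump_prob T0); apply: ler_sum => p _.
by apply: ler_piMr; [exact: jump_prob_ge0 | case/andP: (IH (sigma p.1 p.2 eta))].
Qed.

Lemma hitN_nondecreasing n eta : hit n eta <= hit n.+1 eta.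
Proof.
elim: n eta => [|n IH] eta.
  by rewrite [hit 0 eta]/=; case: ifP => [E|_]; [rewrite /= E | case/andP: (hitN_ge0_le1 1 eta)].
rewrite /=; case: ifP => // _; case: ifP => // _.
by apply: ler_sum => p _; apply: ler_wpM2l; [exact: jump_prob_ge0 | exact: IH].
Qed.

Lemma hitN_cvg eta : hit ^~ eta @ \oo --> P eta.
Proof.
have nd : nondecreasing_seq (hit ^~ eta) by apply/nondecreasing_seqP => n; apply: hitN_nondecreasing.
have ub : has_ubound (range (hit ^~ eta)).
  by exists 1 => _ [n _ <-]; case/andP: (hitN_ge0_le1 n eta).
by have /cvg_ex[l Hl] := nondecreasing_is_cvgn nd ub; rewrite /probE0 (cvg_lim _ Hl).
Qed.

Lemma probE0_ge0_le1 eta : 0 <= P eta <= 1.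
Proof.
have hit_cvg := @hitN_cvg eta.
apply/andP; split; [apply: limr_ge | apply: limr_le]; try exact: cvgP hit_cvg;
  by apply: nearW => n; case/andP: (hitN_ge0_le1 n eta).
Qed.

Lemma probE0_harmonic eta : ~~ inE_N N A eta -> total_rate eta != 0 ->
  \sum_(p : S * S) rate eta p.1 p.2 * (P (sigma p.1 p.2 eta) - P eta) = 0.
Proof.
move=> notE T0.
pose step n := \sum_(p : S * S) rate eta p.1 p.2 / total_rate eta * hit n (sigma p.1 p.2 eta).
have step_cvg : step @ \oo --> P eta.
  have -> : step = (fun n => hit n.+1 eta).
    by apply: funext => n /=; rewrite (negbTE notE) (negbTE T0).
  by have := @hitN_cvg eta; rewrite -cvg_shiftS.
have step_cvg' : step @ \oo -->
    \sum_(p : S * S) rate eta p.1 p.2 / total_rate eta * P (sigma p.1 p.2 eta).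
  apply: cvg_big => //; first exact: add_continuous.
  by move=> p _; apply: cvgMl_tmp; apply: hitN_cvg.
have mean_value : P eta = \sum_(p : S * S) rate eta p.1 p.2 / total_rate eta * P (sigma p.1 p.2 eta).
  exact: cvg_unique _ step_cvg step_cvg'.
under eq_bigr do rewrite mulrBr.
rewrite sumrB -mulr_suml mulrC [P eta]mean_value mulr_suml.
by under [X in _ - X]eq_bigr do rewrite mulrAC divfK //; rewrite subrr.
Qed.

Lemma probE0_dist_le1 eta eta' : `|P eta - P eta'| <= 1.
Proof.
have /andP[? ?] := probE0_ge0_le1 eta; have /andP[? ?] := probE0_ge0_le1 eta'.
by rewrite ler_norml; apply/andP; split; lra.
Qed.

End HittingProbability.

Section TwoSiteConfigurations.
Variables (S : finType) (N : nat) (x y : S).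
Hypothesis xy : x != y.

Lemma zeta0 : zeta N 0 x y = xi N x.
Proof.
apply/ffunP => s; rewrite !ffunE subn0.
by case: (eqVneq s x) => // _; case: (s == y).
Qed.

Lemma zetaN : zeta N N x y = xi N y.
Proof.
apply/ffunP => s; rewrite !ffunE subnn.
by case: (eqVneq s x) => [->|//]; rewrite (negbTE xy).
Qed.

Lemma zeta_x i : zeta N i x y x = (N - i)%N.
Proof. by rewrite ffunE eqxx. Qed.

Lemma zeta_y i : zeta N i x y y = i.
Proof. by rewrite ffunE eq_sym (negbTE xy) eqxx. Qed.

Lemma zeta_other i s : s != x -> s != y -> zeta N i x y s = 0%N.
Proof. by move=> sx sy; rewrite ffunE (negbTE sx) (negbTE sy). Qed.

Lemma zeta_notin_E (A : {set S}) i : (0 < i < N)%N -> ~~ inE_N N A (zeta N i x y).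
Proof.
case/andP=> i0 iN; apply/existsP => -[z /andP[_ /eqP zeta_xi]].
have := congr1 (fun eta : config S => eta x) zeta_xi.
have := congr1 (fun eta : config S => eta y) zeta_xi.
rewrite /= zeta_x zeta_y !ffunE; case: (eqVneq x z) => [<-|_]; last lia.
by rewrite eq_sym (negbTE xy); lia.
Qed.

Lemma sigma_zeta_xy i : (i < N)%N -> sigma x y (zeta N i x y) = zeta N i.+1 x y.
Proof.
move=> iN; rewrite /sigma zeta_x subn_gt0 iN; apply/ffunP => s; rewrite !ffunE.
case: (eqVneq s x) => [->|_]; first by rewrite (negbTE xy) /=; lia.
by case: (eqVneq s y) => /=; lia.
Qed.

Lemma sigma_zeta_yx i : (0 < i <= N)%N -> sigma y x (zeta N i x y) = zeta N i.-1 x y.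
Proof.
case/andP=> i0 iN; rewrite /sigma zeta_y i0; apply/ffunP => s; rewrite !ffunE.
case: (eqVneq s x) => [->|_]; first by rewrite (negbTE xy) /=; lia.
by case: (eqVneq s y) => /=; lia.
Qed.

End TwoSiteConfigurations.

Section ProbE0AlongEdge.
Variables (R : realType) (S : finType) (r : S -> S -> R).
Hypothesis r_ge0 : forall a b, 0 <= r a b.
Variables (N : nat) (dN : R) (A : {set S}) (w x y : S).
Hypotheses (dN_gt0 : 0 < dN) (xy : x != y).
Hypotheses (r_sym : r x y = r y x) (rxy_gt0 : 0 < r x y).

Local Notation P := (probE0 N dN r A w).
Local Notation zeta i := (zeta N i x y).

Lemma zeta_off_edge_mul i (a b : S) : (a, b) != (x, y) -> (a, b) != (y, x) -> a != b ->
  (zeta i a * zeta i b = 0)%N.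
Proof.
move=> ab_xy ab_yx ab.
case: (eqVneq a x) => [ax|ax].
  have bx : b != x by rewrite eq_sym -ax.
  have b_y : b != y by apply: contraNneq ab_xy => ->; rewrite ax.
  by rewrite (zeta_other _ _ bx b_y) muln0.
case: (eqVneq a y) => [ay|ay]; last by rewrite (zeta_other _ _ ax ay).
have b_y : b != y by rewrite eq_sym -ay.
have bx : b != x by apply: contraNneq ab_yx => ->; rewrite ay.
by rewrite (zeta_other _ _ bx b_y) muln0.
Qed.

Lemma rate_zeta_off_edge_le i (p : S * S) : (i <= N)%N -> p != (x, y) -> p != (y, x) ->
  rate dN r (zeta i) p.1 p.2 <= N%:R * dN * r p.1 p.2.
Proof.
case: p => a b /= iN ab_xy ab_yx; rewrite /rate.
case: ifP => ab; last by rewrite !mulr_ge0 ?ler0n // ltW.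
have aN : (zeta i a <= N)%N by rewrite ffunE; case: ifP => _; [rewrite leq_subr | case: ifP].
rewrite mulrDr -natrM zeta_off_edge_mul // addr0.
by apply: ler_wpM2r => //; apply: ler_wpM2r; [exact: ltW | rewrite ler_nat].
Qed.

Lemma probE0_zeta_defect i : (0 < i < N)%N ->
  `|(N - i)%:R * (dN + i%:R) * (P (zeta i.+1) - P (zeta i))
    - i%:R * (dN + (N - i)%:R) * (P (zeta i) - P (zeta i.-1))|
  <= N%:R * dN * ((\sum_(p : S * S) r p.1 p.2) / r x y).
Proof.
move=> iN_pos; have /andP[i0 iN] := iN_pos.
set eta := zeta i.
pose E (p : S * S) := rate dN r eta p.1 p.2 * (P (sigma p.1 p.2 eta) - P eta).
have rate_xy : rate dN r eta x y = (N - i)%:R * (dN + i%:R) * r x y.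
  by rewrite /rate xy zeta_x zeta_y.
have rate_yx : rate dN r eta y x = i%:R * (dN + (N - i)%:R) * r x y.
  by rewrite /rate eq_sym xy r_sym zeta_x zeta_y.
have rate_xy_gt0 : 0 < rate dN r eta x y.
  by rewrite rate_xy !mulr_gt0 ?addr_gt0 ?ltr0n ?subn_gt0.
have T0 : total_rate dN r eta != 0.
  rewrite gt_eqF // (lt_le_trans rate_xy_gt0) // /total_rate (bigD1 (x, y)) //= lerDl.
  by apply: sumr_ge0 => p _; apply: rate_ge0.
(* In [L P = 0] at [eta], the two jumps along the edge give the left-hand side. *)
have := probE0_harmonic r_ge0 w dN_gt0 (zeta_notin_E xy A iN_pos) T0; rewrite -/eta.
have yx_xy : (y, x) != (x, y) by apply: contraNneq xy => -[->].
rewrite (bigD1 (x, y)) //= (bigD1 (y, x)) //= addrA => /eqP; rewrite addr_eq0 => /eqP edge.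
rewrite mulrA ler_pdivlMr // mulrC -[r x y]gtr0_norm // -normrM.
have E_xy : E (x, y) = (N - i)%:R * (dN + i%:R) * r x y * (P (zeta i.+1) - P eta).
  by rewrite -rate_xy -sigma_zeta_xy.
have E_yx : E (y, x) = i%:R * (dN + (N - i)%:R) * r x y * (P (zeta i.-1) - P eta).
  by rewrite -rate_yx -sigma_zeta_yx // i0 ltnW.
rewrite (_ : r x y * _ = E (x, y) + E (y, x)); last by rewrite E_xy E_yx; ring.
rewrite edge normrN; apply: le_trans (ler_norm_sum _ _ _) _.
rewrite mulr_sumr [X in _ <= X](bigID (fun p => (p != (x, y)) && (p != (y, x)))) /=.
rewrite -[X in X <= _]addr0; apply: lerD; last by apply: sumr_ge0 => p _; rewrite !mulr_ge0 ?ler0n // ltW.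
apply: ler_sum => p /andP[p_xy p_yx]; rewrite /E normrM ger0_norm ?rate_ge0 //.
apply: le_trans (rate_zeta_off_edge_le (ltnW iN) p_xy p_yx).
by apply: ler_piMr; [exact: rate_ge0 | exact: probE0_dist_le1].
Qed.

End ProbE0AlongEdge.

Theorem lemma4p10 (R : realType) (S : finType) (r : S -> S -> R)
  (r_ge0 : forall a b : S, 0 <= r a b) (r_diag : forall a : S, r a a = 0)
  (r_irr : irreducible r)
  (d : nat -> R) (d_pos : forall N : nat, 0 < d N) (d_to0 : d @ \oo --> 0)
  (A : {set S}) (w : S) (wA : w \in A)
  (x y : S) (xy : x != y) (rsym : r x y = r y x) (rpos : 0 < r x y) :
  exists C : R, exists N0 : nat, forall N : nat, (N0 <= N)%N ->
    `| probE0 N (d N) r A w (zeta N 1 x y)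
       - (N.-1)%:R / N%:R * probE0 N (d N) r A w (xi N x)
       - 1 / N%:R * probE0 N (d N) r A w (xi N y) |
    <= C * (d N * ln N%:R).
Proof.
set k := (\sum_(p : S * S) r p.1 p.2) / r x y.
have k_ge0 : 0 <= k by rewrite divr_ge0 ?sumr_ge0 // ltW.
exists (2 * expR 1 * (1 + k) * (1 + (ln 2)^-1)), 2%N => N N2.
have := nearly_harmonic_bound (ltnW N2) (d_pos N) k_ge0
  (fun i => probE0_ge0_le1 r_ge0 N A w (d_pos N) (zeta N i x y))
  (probE0_zeta_defect r_ge0 A w (d_pos N) xy rsym rpos).
rewrite zeta0 zetaN // => /le_trans; apply.
rewrite -[X in _ <= X]mulrA; apply: ler_wpM2l; first by rewrite !mulr_ge0 ?addr_ge0 ?expR_ge0.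
rewrite mulrCA; apply: ler_wpM2l; [exact: ltW | exact: series_harmonic_le_ln].
Qed.
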